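(* Let $P$ be a finite self-dual poset and let $\kappa:P\to P$ be an order-reversing bijection which is an involution. For $I\in\mathcal J(P)$ let $I'$ be the order ideal generated by the antichain $\kappa(\max(I))$. Then for all $I\in\mathcal J(P)$, $\rho^{-1}(I')=(\rho(I))'$.
   Context: $\mathcal J(P)$ is the set of order ideals of $P$. Rowmotion $\rho:\mathcal J(P)\to\mathcal J(P)$ sends $I$ to the order ideal generated by $\min(P\setminus I)$; it is a bijection. An order-reversing bijection $\kappa$ satisfies $x\le y\iff\kappa(x)\ge\kappa(y)$. *)

From mathcomp Require Import all_boot all_order.
Set Implicit Arguments. Unset Strict Implicit. Unset Printing Implicit Defensive.
Import Order.Theory.
Local Open Scope order_scope.

Section Rowmotion.
Context {d : Order.disp_t} {P : finPOrderType d}.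

Definition is_ideal (I : {set P}) : bool :=
  [forall x, forall y, (y \in I) && (x <= y) ==> (x \in I)].

Definition ideal_gen (A : {set P}) : {set P} :=
  [set x | [exists y in A, x <= y]].

Definition maxset_of (A : {set P}) : {set P} :=
  [set x in A | [forall y in A, (x <= y) ==> (y == x)]].
Definition minset_of (A : {set P}) : {set P} :=
  [set x in A | [forall y in A, (y <= x) ==> (y == x)]].

Definition rowmotion (I : {set P}) : {set P} := ideal_gen (minset_of (~: I)).

(* inverse rowmotion on J(P): the (unique, rowmotion being a bijection of J(P))
   order ideal J with rowmotion J = I *)
Definition rowmotion_inv (I : {set P}) : {set P} :=
  odflt set0 [pick J | is_ideal J && (rowmotion J == I)].

Definition kprime (kappa : P -> P) (I : {set P}) : {set P} :=
  ideal_gen (kappa @: maxset_of I).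

End Rowmotion.

(* On order ideals rowmotion has the explicit inverse K |-> P \ up(max K): an
   ideal is determined by the maximal elements of itself, and also by the
   minimal elements of its complement.  An order-reversing involution kappa
   swaps down-sets and up-sets: down(kappa A) = kappa^-1 (up A) and
   up(kappa A) = kappa^-1 (down A).  Hence
     rowmotion^-1 (I') = P \ up(kappa (max I)) = P \ kappa^-1 I,
     (rowmotion I)'    = down(kappa (min (P \ I))) = kappa^-1 (P \ I). *)

From mathcomp Require Import all_boot all_order.
Set Implicit Arguments. Unset Strict Implicit. Unset Printing Implicit Defensive.
Import Order.Theory.
Local Open Scope order_scope.

Section OrderIdeals.
Context {d : Order.disp_t} {P : finPOrderType d}.
Implicit Types (A I J K : {set P}) (x y : P).

Definition antichain A : Prop := {in A &, forall a b, a <= b -> a = b}.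

Lemma ideal_genP A x : reflect (exists2 y, y \in A & x <= y) (x \in ideal_gen A).
Proof. by rewrite inE; apply: (iffP exists_inP) => -[y]; exists y. Qed.

Lemma is_idealP I : reflect {in I, forall y x, x <= y -> x \in I} (is_ideal I).
Proof.
apply: (iffP forallP) => [idI y yI x xy | idI x].
  by have /forallP/(_ y)/implyP := idI x; apply; rewrite yI xy.
by apply/forallP => y; apply/implyP => /andP[yI xy]; apply: idI xy.
Qed.

Lemma ideal_gen_ideal A : is_ideal (ideal_gen A).
Proof.
apply/is_idealP => y /ideal_genP[z zA yz] x xy.
by apply/ideal_genP; exists z; rewrite // (le_trans xy).
Qed.

Lemma minset_below A x : x \in A -> exists2 m, m \in minset_of A & m <= x.
Proof.
move=> xA; pose below y := [set z in A | z < y].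
pose cand := [pred y | (y \in A) && (y <= x)].
have candx : cand x by rewrite /= xA lexx.
have [m /andP[mA mx] m_min] := arg_minnP (fun y => #|below y|) candx.
exists m => //; rewrite inE mA; apply/forall_inP => y yA; apply/implyP => ym.
apply/contraT => ynm; have ltym : y < m by rewrite lt_neqAle ynm.
have : (#|below y| < #|below m|)%N.
  apply/proper_card/properP; split.
    by apply/subsetP => z; rewrite !inE => /andP[-> zy]; apply: lt_trans ltym.
  by exists y; rewrite !inE ?yA ?ltym // ltxx.
by rewrite ltnNge m_min //= yA (le_trans ym).
Qed.

Lemma minset_antichain A : antichain (minset_of A).
Proof.
move=> a b; rewrite !inE => /andP[aA _] /andP[_ /forall_inP b_min] ab.
by apply/eqP; have /implyP := b_min a aA; apply.
Qed.

Lemma maxset_ideal_gen A : antichain A -> maxset_of (ideal_gen A) = A.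
Proof.
move=> achA; have genA y : y \in A -> y \in ideal_gen A.
  by move=> yA; apply/ideal_genP; exists y.
apply/setP => x; apply/idP/idP => [|xA].
  rewrite inE => /andP[/ideal_genP[y yA xy] /forall_inP x_max].
  by have /implyP/(_ xy)/eqP <- := x_max y (genA y yA).
rewrite inE genA //=; apply/forall_inP => y /ideal_genP[z zA yz]; apply/implyP => xy.
have xz := achA x z xA zA (le_trans xy yz).
by rewrite eq_le xy andbT xz.
Qed.

End OrderIdeals.

Section Duality.
Context {d : Order.disp_t} {P : finPOrderType d}.
Implicit Types (A I J K : {set P}) (x y : P).

(* Up-sets are the ideals of the dual order, so each fact about ideals and
   maximal elements dualizes to one about up-sets and minimal elements. *)
Definition up_gen A : {set P} := @ideal_gen _ P^d A.

Lemma up_genP A x : reflect (exists2 y, y \in A & y <= x) (x \in up_gen A).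
Proof. by rewrite inE; apply: (iffP exists_inP) => -[y]; exists y. Qed.

Lemma maxset_above A x : x \in A -> exists2 m, m \in maxset_of A & x <= m.
Proof. exact: (@minset_below _ P^d). Qed.

Lemma maxset_antichain A : antichain (maxset_of A).
Proof. by move=> a b aA bA ab; rewrite (@minset_antichain _ P^d A b a). Qed.

Lemma minset_up_gen A : antichain A -> minset_of (up_gen A) = A.
Proof. by move=> achA; apply: (@maxset_ideal_gen _ P^d) => a b aA bA ba; rewrite (achA b a). Qed.

Lemma ideal_gen_maxset I : is_ideal I -> ideal_gen (maxset_of I) = I.
Proof.
move=> /is_idealP idI; apply/setP => x; apply/ideal_genP/idP => [[y]|].
  by rewrite inE => /andP[yI _]; apply: idI.
by case/maxset_above => m; exists m.
Qed.

End Duality.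

Section Rowmotion.
Context {d : Order.disp_t} {P : finPOrderType d}.
Implicit Types (A I J K : {set P}) (x y : P).

Lemma up_gen_minsetC I : is_ideal I -> up_gen (minset_of (~: I)) = ~: I.
Proof.
move=> /is_idealP idI; apply: (@ideal_gen_maxset _ P^d); apply/is_idealP => y.
rewrite inE => yI x yx; rewrite inE; apply: contra yI => xI; exact: idI yx.
Qed.

Lemma setC_up_gen_ideal A : is_ideal (~: up_gen A).
Proof.
apply/is_idealP => y; rewrite in_setC => yA x xy; rewrite in_setC; apply: contra yA.
by case/up_genP => z zA zx; apply/up_genP; exists z; rewrite // (le_trans zx).
Qed.

Lemma rowmotion_setC_up_gen K :
  is_ideal K -> rowmotion (~: up_gen (maxset_of K)) = K.
Proof.
by move=> idK; rewrite /rowmotion setCK minset_up_gen ?ideal_gen_maxset //; apply: maxset_antichain.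
Qed.

Lemma setC_up_gen_rowmotion J :
  is_ideal J -> ~: up_gen (maxset_of (rowmotion J)) = J.
Proof.
by move=> idJ; rewrite maxset_ideal_gen ?up_gen_minsetC ?setCK //; apply: minset_antichain.
Qed.

Lemma rowmotion_invE K : is_ideal K -> rowmotion_inv K = ~: up_gen (maxset_of K).
Proof.
move=> idK; rewrite /rowmotion_inv; case: pickP => [J /andP[idJ /eqP <-]|].
  by rewrite setC_up_gen_rowmotion.
by move/(_ (~: up_gen (maxset_of K))); rewrite setC_up_gen_ideal rowmotion_setC_up_gen ?eqxx.
Qed.

End Rowmotion.

Section Antitone.
Context {d : Order.disp_t} {P : finPOrderType d} (kappa : P -> P).
Hypothesis kappa_anti : forall x y : P, (x <= y) = (kappa y <= kappa x).
Hypothesis kappaK : involutive kappa.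
Implicit Types (A : {set P}).

Lemma antichain_imset A : antichain A -> antichain (kappa @: A).
Proof.
move=> achA _ _ /imsetP[a aA ->] /imsetP[b bA ->].
by rewrite -kappa_anti => ba; rewrite (achA b a).
Qed.

Lemma ideal_gen_imset A : ideal_gen (kappa @: A) = kappa @^-1: up_gen A.
Proof.
apply/setP => x; rewrite [RHS]in_set; apply/ideal_genP/up_genP => -[y].
  by case/imsetP => a aA ->; rewrite kappa_anti kappaK; exists a.
by move=> yA yx; exists (kappa y); rewrite ?imset_f // kappa_anti kappaK.
Qed.

Lemma up_gen_imset A : up_gen (kappa @: A) = kappa @^-1: ideal_gen A.
Proof.
apply/setP => x; rewrite [RHS]in_set; apply/up_genP/ideal_genP => -[y].
  by case/imsetP => a aA ->; rewrite kappa_anti kappaK; exists a.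
by move=> yA yx; exists (kappa y); rewrite ?imset_f // kappa_anti kappaK.
Qed.

End Antitone.

Theorem lemma5p13 (d : Order.disp_t) (P : finPOrderType d) (kappa : P -> P)
  (kappa_bij : bijective kappa)
  (kappa_rev : forall x y : P, (x <= y) = (kappa y <= kappa x))
  (kappa_inv : involutive kappa)
  (I : {set P}) (HI : is_ideal I) :
  rowmotion_inv (kprime kappa I) = kprime kappa (rowmotion I).
Proof.
have kmax_antichain := antichain_imset kappa_rev (@maxset_antichain _ _ I).
have -> : rowmotion_inv (kprime kappa I) = ~: kappa @^-1: I.
  rewrite rowmotion_invE ?ideal_gen_ideal // /kprime maxset_ideal_gen //.
  by rewrite (up_gen_imset kappa_rev kappa_inv) ideal_gen_maxset.
have -> : kprime kappa (rowmotion I) = kappa @^-1: ~: I.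
  rewrite /kprime /rowmotion maxset_ideal_gen; last exact: minset_antichain.
  by rewrite (ideal_gen_imset kappa_rev kappa_inv) up_gen_minsetC.
by rewrite preimsetC.
Qed.
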